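(* The three families of test equations for nilpotent algebra presentations are irredundant: for each $t\in\{1,2,3\}$ there exists a nilpotent presentation over $\mathbb Z$ for which some test equation of type (T$t$) fails while all test equations of the other two types hold, where, with $w$ the weight function and $d=\max_iw(a_i)$, the types are (T1) $c(a_k\,c(a_ja_i))=c(c(a_ka_j)\,a_i)$ for $w(a_k)+w(a_j)+w(a_i)\le d$; (T2) $c(r_j\,c(a_ja_i))=c(c(r_ja_j)\,a_i)$ for $r_j<\infty$, $w(a_j)+w(a_i)\le d$; (T3) $c(r_i\,c(a_ja_i))=c(a_j\,c(r_ia_i))$ for $r_i<\infty$, $w(a_j)+w(a_i)\le d$. In particular, no proper subset of these families suffices to detect inconsistency in general.
   Context: $R$ is a field or $\mathbb Z$; algebras are associative, not necessarily unital. A nilpotent presentation over $R$ on generators $a_1,\ldots,a_n$ consists of $r_1,\ldots,r_n\in\mathbb N\cup\{\infty\}$ (all $\infty$ when $R$ is a field) and $e_{i,k},b_{i,j,k}\in R$ with $0\le e_{i,k},b_{i,j,k}<r_k$ when $r_k<\infty$, with defining relations $r_ia_i=\sum_{k>i}e_{i,k}a_k$ (for $r_i<\infty$) and $a_ja_i=\sum_{k>\max\{i,j\}}b_{i,j,k}a_k$ for all $1\le i,j\le n$. $F$ is the free associative $R$-algebra on $a_1,\ldots,a_n$ and $I$ the ideal generated by the differences of the two sides of the relations; the presented algebra is $F/I$. A reduced form is $x_1a_1+\cdots+x_na_n$ with $x_i\in R$, $0\le x_i<r_i$ when $r_i<\infty$. The collection function $c\colon F\to F$ maps each element to a reduced form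 congruent to it modulo $I$, computed by the collection algorithm (using linearity, rewriting products $a_ja_i$ by the right-hand sides of the product relations, and reducing coefficients via the relations $r_ia_i=\ldots$). The presentation is consistent if every element of $F/I$ has exactly one reduced form. The weight function $w$ is the pointwise minimal function $\{a_1,\ldots,a_n\}\to\mathbb N$ with $w(a_k)\ge w(a_i)$ when $e_{i,k}\ne0$ and $w(a_k)\ge w(a_i)+w(a_j)$ when $b_{i,j,k}\ne0$. *)

From mathcomp Require Import all_boot all_order all_algebra.
Set Implicit Arguments. Unset Strict Implicit. Unset Printing Implicit Defensive.
Import Order.TTheory GRing.Theory Num.Theory.
Local Open Scope ring_scope.

(* A nilpotent presentation over Z on generators a_0,...,a_{n-1}
   (0-based indices).  r i = None means r_i = infinity, r i = Some m means r_i = m.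
   e i k : coefficient in  r_i a_i = sum_{k>i} e_{i,k} a_k.
   b i j k : coefficient in  a_j a_i = sum_{k>max(i,j)} b_{i,j,k} a_k. *)
Record pres (n : nat) := Pres {
  pr_r : 'I_n -> option nat;
  pr_e : 'I_n -> 'I_n -> int;
  pr_b : 'I_n -> 'I_n -> 'I_n -> int }.

Definition valid_pres n (P : pres n) : Prop :=
  [/\ (forall (i : 'I_n) m, pr_r P i = Some m -> (0 < m)%N),
      (forall i k : 'I_n, (k <= i)%N -> pr_e P i k = 0),
      (forall i j k : 'I_n, (k <= maxn i j)%N -> pr_b P i j k = 0),
      (forall (i k : 'I_n) m, pr_r P k = Some m -> 0 <= pr_e P i k /\ pr_e P i k < m%:Z)
    & (forall (i j k : 'I_n) m, pr_r P k = Some m -> 0 <= pr_b P i j k /\ pr_b P i j k < m%:Z)].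

(* Elements of the free algebra F of degree <= 2:  a linear part
   sum_m lin m * a_m  plus a quadratic part  sum_{j,i} quad j i * a_j a_i. *)
Record F2 (n : nat) := MkF2 {
  lin : {ffun 'I_n -> int};
  quad : {ffun 'I_n -> 'I_n -> int} }.

Definition reduced_vec n := {ffun 'I_n -> int}.

Definition reduce_step n (P : pres n) (x : reduced_vec n) (i : 'I_n) : reduced_vec n :=
  match pr_r P i with
  | None => x
  | Some m =>
      let q := (x i %/ m%:Z)%Z in
      [ffun k => if k == i then (x i %% m%:Z)%Z else x k + q * pr_e P i k]
  end.

Definition reduce n (P : pres n) (x : reduced_vec n) : reduced_vec n :=
  foldl (reduce_step P) x (enum 'I_n).

Definition collect n (P : pres n) (f : F2 n) : reduced_vec n :=
  reduce P [ffun k => lin f k + \sum_(j < n) \sum_(i < n) quad f j i * pr_b P i j k].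

Definition linF n (x : reduced_vec n) : F2 n := MkF2 x [ffun _ => fun _ => 0].
Definition genv n (i : 'I_n) : reduced_vec n := [ffun m => (m == i)%:Z].
Definition prod_gg n (j i : 'I_n) : F2 n :=
  MkF2 [ffun _ => 0] [ffun j' => fun i' => ((j' == j) && (i' == i))%:Z].
Definition prod_gl n (j : 'I_n) (x : reduced_vec n) : F2 n :=
  MkF2 [ffun _ => 0] [ffun j' => fun m => (j' == j)%:Z * x m].
Definition prod_lg n (x : reduced_vec n) (i : 'I_n) : F2 n :=
  MkF2 [ffun _ => 0] [ffun m => fun i' => x m * (i' == i)%:Z].
Definition scal_l n (z : int) (x : reduced_vec n) : F2 n :=
  linF [ffun m => z * x m].

Definition weight_ok n (P : pres n) (w : 'I_n -> nat) : Prop :=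
  [/\ (forall i, (1 <= w i)%N),
      (forall i k, pr_e P i k != 0 -> (w i <= w k)%N)
    & (forall i j k, pr_b P i j k != 0 -> (w i + w j <= w k)%N)].

Definition is_weight n (P : pres n) (w : 'I_n -> nat) : Prop :=
  weight_ok P w /\ (forall f, weight_ok P f -> forall i, (w i <= f i)%N).

Definition maxw n (w : 'I_n -> nat) : nat := \max_(i < n) w i.

Definition T1_holds n (P : pres n) (w : 'I_n -> nat) : Prop :=
  forall i j k : 'I_n, (w k + w j + w i <= maxw w)%N ->
    collect P (prod_gl k (collect P (prod_gg j i)))
    = collect P (prod_lg (collect P (prod_gg k j)) i).

Definition T2_holds n (P : pres n) (w : 'I_n -> nat) : Prop :=
  forall (i j : 'I_n) (m : nat), pr_r P j = Some m -> (w j + w i <= maxw w)%N ->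
    collect P (scal_l m%:Z (collect P (prod_gg j i)))
    = collect P (prod_lg (collect P (scal_l m%:Z (genv j))) i).

Definition T3_holds n (P : pres n) (w : 'I_n -> nat) : Prop :=
  forall (i j : 'I_n) (m : nat), pr_r P i = Some m -> (w j + w i <= maxw w)%N ->
    collect P (scal_l m%:Z (collect P (prod_gg j i)))
    = collect P (prod_gl j (collect P (scal_l m%:Z (genv i)))).

From mathcomp Require Import all_boot all_order all_algebra.
From mathcomp Require Import zify.
Set Implicit Arguments. Unset Strict Implicit. Unset Printing Implicit Defensive.
Local Open Scope ring_scope.

(* In P1 every r_i is infinite, so (T2) and (T3) are
   vacuous, while a_0 (a_0 a_0) = a_0 a_1 = 0 and (a_0 a_0) a_0 = a_1 a_0 = a_2
   violate (T1).  In P2 and P3 the weights are 1, 1, 2, so (T1) is vacuous,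
   and 2 a_0 = a_1: in P2, 2 (a_0 a_0) = 0 but (2 a_0) a_0 = a_1 a_0 = a_2
   violates (T2); P3 is its mirror image and violates (T3) through
   a_0 (2 a_0) = a_0 a_1 = a_2.  The remaining, finitely many, instances are
   checked by evaluating a computable copy of the collection function. *)

(* [enum 'I_n] is built with [insub], hence with the opaque [idP], and does
   not evaluate; [ord_seq n] is the same sequence built with [lift]. *)
Fixpoint ord_seq (n : nat) : seq 'I_n :=
  if n is n'.+1 then ord0 :: map (lift ord0) (ord_seq n') else [::].

Lemma ord_seqE n : ord_seq n = enum 'I_n.
Proof.
elim: n => [|n IHn] /=; last by rewrite enum_ordSl IHn.
by apply/esym/size0nil; rewrite size_enum_ord.
Qed.

Lemma big_ord_seq (R : Type) (idx : R) (op : SemiGroup.com_law R) n (F : 'I_n -> R) :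
  \big[op/idx]_(i < n) F i = foldr op idx (map F (ord_seq n)).
Proof. by rewrite foldrE big_map ord_seqE big_enum. Qed.

Definition all_ord n (p : pred 'I_n) : bool := all p (ord_seq n).
Definition all_ord2 n (p : 'I_n -> pred 'I_n) : bool := all_ord (fun i => all_ord (p i)).
Definition all_ord3 n (p : 'I_n -> 'I_n -> pred 'I_n) : bool :=
  all_ord (fun i => all_ord2 (p i)).

Lemma all_ordP n (p : pred 'I_n) : reflect (forall i, p i) (all_ord p).
Proof.
rewrite /all_ord ord_seqE.
apply: (iffP allP) => [p_enum i | p_all i _]; last exact: p_all.
by apply: p_enum; rewrite mem_enum.
Qed.

Lemma all_ord2P n (p : 'I_n -> pred 'I_n) : reflect (forall i j, p i j) (all_ord2 p).
Proof. by apply: (iffP (all_ordP _)) => p_all i; [apply/all_ordP | apply/all_ordP]. Qed.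

Lemma all_ord3P n (p : 'I_n -> 'I_n -> pred 'I_n) :
  reflect (forall i j k, p i j k) (all_ord3 p).
Proof. by apply: (iffP (all_ordP _)) => p_all i; [apply/all_ord2P | apply/all_ord2P]. Qed.

Definition eqfun_ord n (T : eqType) (f g : 'I_n -> T) : bool :=
  all_ord (fun k => f k == g k).

Lemma eqfun_ordP n (T : eqType) (f g : 'I_n -> T) : reflect (f =1 g) (eqfun_ord f g).
Proof. by apply: (iffP (all_ordP _)) => fg k; apply/eqP. Qed.

Section Collection.

Variables (n : nat) (P : pres n).

Definition reduce_stepf (x : 'I_n -> int) (i : 'I_n) : 'I_n -> int :=
  if pr_r P i is Some m then
    fun k => if k == i then (x i %% m%:Z)%Z else x k + (x i %/ m%:Z)%Z * pr_e P i k
  else x.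

Definition reducef (x : 'I_n -> int) : 'I_n -> int := foldl reduce_stepf x (ord_seq n).

Lemma reduceE (x : reduced_vec n) xf : x =1 xf -> reduce P x =1 reducef xf.
Proof.
rewrite /reduce /reducef -ord_seqE.
elim: (ord_seq n) x xf => [|i s IHs] x xf Ex //=.
apply: IHs => k; rewrite /reduce_step /reduce_stepf; case: (pr_r P i) => [m|] //.
by rewrite ffunE !Ex.
Qed.

(* [collect] on plain functions: finite functions and big operators are
   locked and do not evaluate. *)
Definition collectf (l : 'I_n -> int) (q : 'I_n -> 'I_n -> int) : 'I_n -> int :=
  reducef (fun k => l k + foldr +%R 0
    [seq foldr +%R 0 [seq q j i * pr_b P i j k | i <- ord_seq n] | j <- ord_seq n]).

Lemma collectE (f : F2 n) l q :
  lin f =1 l -> (forall j, quad f j =1 q j) -> collect P f =1 collectf l q.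
Proof.
move=> El Eq; apply: reduceE => k; rewrite ffunE El big_ord_seq.
congr (_ + foldr _ _ _); apply: eq_map => j.
by rewrite big_ord_seq; congr (foldr _ _ _); apply: eq_map => i; rewrite Eq.
Qed.

Definition collectf_gg (j i : 'I_n) :=
  collectf (fun=> 0) (fun j' i' => ((j' == j) && (i' == i))%:Z).
Definition collectf_gl (j : 'I_n) x := collectf (fun=> 0) (fun j' m => (j' == j)%:Z * x m).
Definition collectf_lg x (i : 'I_n) := collectf (fun=> 0) (fun m i' => x m * (i' == i)%:Z).
Definition collectf_scal (z : int) x := collectf (fun m => z * x m) (fun _ _ => 0).

Lemma collect_prod_gg j i : collect P (prod_gg j i) =1 collectf_gg j i.
Proof. by apply: collectE => [k | j' i'] /=; rewrite ffunE. Qed.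

Lemma collect_prod_gl j (x : reduced_vec n) xf :
  x =1 xf -> collect P (prod_gl j x) =1 collectf_gl j xf.
Proof. by move=> Ex; apply: collectE => [k | j' i'] /=; rewrite ffunE ?Ex. Qed.

Lemma collect_prod_lg i (x : reduced_vec n) xf :
  x =1 xf -> collect P (prod_lg x i) =1 collectf_lg xf i.
Proof. by move=> Ex; apply: collectE => [k | j' i'] /=; rewrite ffunE ?Ex. Qed.

Lemma collect_scal_l z (x : reduced_vec n) xf :
  x =1 xf -> collect P (scal_l z x) =1 collectf_scal z xf.
Proof. by move=> Ex; apply: collectE => [k | j' i'] /=; rewrite ffunE ?Ex. Qed.

Lemma genvE (i : 'I_n) : genv i =1 fun m => (m == i)%:Z.
Proof. by move=> m; rewrite ffunE. Qed.

Lemma eq_collectP (x y : reduced_vec n) xf yf :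
  x =1 xf -> y =1 yf -> reflect (x = y) (eqfun_ord xf yf).
Proof.
move=> Ex Ey; apply: (iffP (eqfun_ordP _ _)) => [xy | xy k].
  by apply/ffunP => k; rewrite Ex Ey.
by rewrite -Ex -Ey xy.
Qed.

End Collection.

Section Tests.

Variables (n : nat) (P : pres n) (w : 'I_n -> nat).

Definition below_order (r : option nat) (z : int) : bool :=
  if r is Some m then (0 <= z) && (z < m%:Z) else true.

Definition valid_test : bool :=
  [&& all_ord (fun i => if pr_r P i is Some m then (0 < m)%N else true),
      all_ord2 (fun i k => (k <= i)%N ==> (pr_e P i k == 0)),
      all_ord3 (fun i j k => (k <= maxn i j)%N ==> (pr_b P i j k == 0)),
      all_ord2 (fun i k => below_order (pr_r P k) (pr_e P i k))
    & all_ord3 (fun i j k => below_order (pr_r P k) (pr_b P i j k))].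

Lemma valid_presP : reflect (valid_pres P) valid_test.
Proof.
rewrite /below_order.
apply: (iffP and5P) => -[r_pos e_tri b_tri e_low b_low]; split.
- by move=> i m ri; move/all_ordP/(_ i): r_pos; rewrite ri.
- by move=> i k ki; move/all_ord2P/(_ i k)/implyP/(_ ki)/eqP: e_tri.
- by move=> i j k kij; move/all_ord3P/(_ i j k)/implyP/(_ kij)/eqP: b_tri.
- by move=> i k m rk; move/all_ord2P/(_ i k): e_low; rewrite rk => /andP.
- by move=> i j k m rk; move/all_ord3P/(_ i j k): b_low; rewrite rk => /andP.
- by apply/all_ordP => i; case ri: (pr_r P i) => [m|] //; apply: r_pos ri.
- by apply/all_ord2P => i k; apply/implyP => ki; apply/eqP/e_tri.
- by apply/all_ord3P => i j k; apply/implyP => kij; apply/eqP/b_tri.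
- by apply/all_ord2P => i k; case rk: (pr_r P k) => [m|] //; apply/andP/(e_low _ _ _ rk).
by apply/all_ord3P => i j k; case rk: (pr_r P k) => [m|] //; apply/andP/(b_low _ _ _ _ rk).
Qed.

Definition weight_test : bool :=
  [&& all_ord (fun i => 0 < w i)%N,
      all_ord2 (fun i k => (pr_e P i k != 0) ==> (w i <= w k)%N)
    & all_ord3 (fun i j k => (pr_b P i j k != 0) ==> (w i + w j <= w k)%N)].

Lemma weight_okP : reflect (weight_ok P w) weight_test.
Proof.
apply: (iffP and3P) => -[w_pos e_mono b_mono]; split.
- exact/all_ordP.
- by move=> i k eik; move/all_ord2P/(_ i k)/implyP/(_ eik): e_mono.
- by move=> i j k bijk; move/all_ord3P/(_ i j k)/implyP/(_ bijk): b_mono.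
- exact/all_ordP.
- by apply/all_ord2P => i k; apply/implyP/e_mono.
by apply/all_ord3P => i j k; apply/implyP/b_mono.
Qed.

Definition weight_attained : bool :=
  all_ord (fun k => [|| w k == 1%N,
    has (fun i => (pr_e P i k != 0) && (w k == w i)) (ord_seq n)
  | has (fun i => has (fun j => (pr_b P i j k != 0) && (w k == w i + w j)) (ord_seq n))
        (ord_seq n)]).

(* Nonzero coefficients only point to later generators, so the weights
   are bounded from below by induction along the generator order. *)
Lemma is_weight_attained :
  valid_pres P -> weight_ok P w -> weight_attained -> is_weight P w.
Proof.
move=> [_ e_tri b_tri _ _] w_ok /all_ordP w_att; split=> // f [f_pos f_e f_b].
suff w_le_f m (k : 'I_n) : (k < m)%N -> (w k <= f k)%N by move=> k; apply: (w_le_f k.+1).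
elim: m k => // m IHm k km.
case/or3P: (w_att k) => [/eqP-> | /hasP[i _ /andP[eik /eqP->]] | ].
- exact: f_pos.
- have ik : (i < k)%N by rewrite ltnNge; apply: contra eik => ki; rewrite e_tri.
  by apply: leq_trans (f_e _ _ eik); apply: IHm; lia.
case/hasP=> i _ /hasP[j _ /andP[bijk /eqP->]].
have ijk : (maxn i j < k)%N by rewrite ltnNge; apply: contra bijk => kij; rewrite b_tri.
by apply: leq_trans (f_b _ _ _ bijk); apply: leq_add; apply: IHm; lia.
Qed.

Local Notation d := (foldr maxn 0%N (map w (ord_seq n))).

Definition T1_test : bool :=
  all_ord3 (fun i j k => (w k + w j + w i <= d)%N ==>
    eqfun_ord (collectf_gl P k (collectf_gg P j i)) (collectf_lg P (collectf_gg P k j) i)).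

Definition T2_test : bool :=
  all_ord2 (fun i j => if pr_r P j is Some m then (w j + w i <= d)%N ==>
    eqfun_ord (collectf_scal P m (collectf_gg P j i))
              (collectf_lg P (collectf_scal P m (fun k => (k == j)%:Z)) i)
  else true).

Definition T3_test : bool :=
  all_ord2 (fun i j => if pr_r P i is Some m then (w j + w i <= d)%N ==>
    eqfun_ord (collectf_scal P m (collectf_gg P j i))
              (collectf_gl P j (collectf_scal P m (fun k => (k == i)%:Z)))
  else true).

Lemma T1P : reflect (T1_holds P w) T1_test.
Proof.
have E i j k := eq_collectP (collect_prod_gl P k (collect_prod_gg P j i))
                            (collect_prod_lg P i (collect_prod_gg P k j)).
rewrite /T1_test -big_ord_seq; apply: (iffP (all_ord3P _)) => T i j k.
  by move=> hw; apply/E; move/implyP: (T i j k); apply.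
by apply/implyP => hw; apply/E/T.
Qed.

Lemma T2P : reflect (T2_holds P w) T2_test.
Proof.
have E i j m := eq_collectP (collect_scal_l P m (collect_prod_gg P j i))
                            (collect_prod_lg P i (collect_scal_l P m (genvE j))).
rewrite /T2_test -big_ord_seq; apply: (iffP (all_ord2P _)) => T i j.
  by move=> m rj hw; move: (T i j); rewrite rj => /implyP/(_ hw)/E.
by case rj: (pr_r P j) => [m|] //; apply/implyP => hw; apply/E/T.
Qed.

Lemma T3P : reflect (T3_holds P w) T3_test.
Proof.
have E i j m := eq_collectP (collect_scal_l P m (collect_prod_gg P j i))
                            (collect_prod_gl P j (collect_scal_l P m (genvE i))).
rewrite /T3_test -big_ord_seq; apply: (iffP (all_ord2P _)) => T i j.
  by move=> m ri hw; move: (T i j); rewrite ri => /implyP/(_ hw)/E.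
by case ri: (pr_r P i) => [m|] //; apply/implyP => hw; apply/E/T.
Qed.

End Tests.

(* a_0 a_0 = a_1, a_1 a_0 = a_2, all r_i infinite *)
Definition P1 : pres 3 := Pres (fun=> None) (fun _ _ => 0)
  (fun i j k => match val i, val j, val k with
                | 0, 0, 1 | 0, 1, 2 => 1 | _, _, _ => 0 end)%N.

(* 2 a_0 = a_1, a_1 a_0 = a_2, a_1 a_1 = 2 a_2 *)
Definition P2 : pres 3 := Pres (fun i => if val i == 0%N then Some 2%N else None)
  (fun i k => match val i, val k with 0, 1 => 1 | _, _ => 0 end)%N
  (fun i j k => match val i, val j, val k with
                | 0, 1, 2 => 1 | 1, 1, 2 => 2 | _, _, _ => 0 end)%N.

(* 2 a_0 = a_1, a_0 a_1 = a_2, a_1 a_1 = 2 a_2 *)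
Definition P3 : pres 3 := Pres (fun i => if val i == 0%N then Some 2%N else None)
  (fun i k => match val i, val k with 0, 1 => 1 | _, _ => 0 end)%N
  (fun i j k => match val i, val j, val k with
                | 1, 0, 2 => 1 | 1, 1, 2 => 2 | _, _, _ => 0 end)%N.

Definition w1 (i : 'I_3) : nat := nth 0 [:: 1; 2; 3] i.
Definition w2 (i : 'I_3) : nat := nth 0 [:: 1; 1; 2] i.

Lemma P1_fails_only_T1 :
  valid_pres P1 /\ is_weight P1 w1 /\
  ~ T1_holds P1 w1 /\ T2_holds P1 w1 /\ T3_holds P1 w1.
Proof.
have valid : valid_pres P1 by apply/valid_presP; vm_compute.
have w1_weight : is_weight P1 w1.
  by apply: is_weight_attained; [ | apply/weight_okP | ]; vm_compute.
by do 2!split=> //; split; [move/T1P | split; [apply/T2P | apply/T3P]]; vm_compute.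
Qed.

Lemma P2_fails_only_T2 :
  valid_pres P2 /\ is_weight P2 w2 /\
  T1_holds P2 w2 /\ ~ T2_holds P2 w2 /\ T3_holds P2 w2.
Proof.
have valid : valid_pres P2 by apply/valid_presP; vm_compute.
have w2_weight : is_weight P2 w2.
  by apply: is_weight_attained; [ | apply/weight_okP | ]; vm_compute.
by do 2!split=> //; split; [apply/T1P | split; [move/T2P | apply/T3P]]; vm_compute.
Qed.

Lemma P3_fails_only_T3 :
  valid_pres P3 /\ is_weight P3 w2 /\
  T1_holds P3 w2 /\ T2_holds P3 w2 /\ ~ T3_holds P3 w2.
Proof.
have valid : valid_pres P3 by apply/valid_presP; vm_compute.
have w2_weight : is_weight P3 w2.
  by apply: is_weight_attained; [ | apply/weight_okP | ]; vm_compute.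
by do 2!split=> //; split; [apply/T1P | split; [apply/T2P | move/T3P]]; vm_compute.
Qed.

Theorem proposition27 :
  (exists (n : nat) (P : pres n) (w : 'I_n -> nat),
      valid_pres P /\ is_weight P w /\
      ~ T1_holds P w /\ T2_holds P w /\ T3_holds P w) /\
  (exists (n : nat) (P : pres n) (w : 'I_n -> nat),
      valid_pres P /\ is_weight P w /\
      T1_holds P w /\ ~ T2_holds P w /\ T3_holds P w) /\
  (exists (n : nat) (P : pres n) (w : 'I_n -> nat),
      valid_pres P /\ is_weight P w /\
      T1_holds P w /\ T2_holds P w /\ ~ T3_holds P w).
Proof.
split; first by exists 3%N, P1, w1; exact: P1_fails_only_T1.
split; first by exists 3%N, P2, w2; exact: P2_fails_only_T2.
by exists 3%N, P3, w2; exact: P3_fails_only_T3.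
Qed.
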